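(* Let $n\ge 1$ and $1\le p\le k\le n$. The number $F(n;p,k)$ of $\alpha\in\mathcal{ORCT}_n$ with $h(\alpha)=p$ and $w^+(\alpha)=k$ equals $2\binom{n-1}{p-1}$ if $p>1$, and equals $1$ if $p=1$.
   Context: $X_n=\{1,2,\dots,n\}$ with its usual order; maps are written on the right ($x\alpha$). A map $\alpha:X_n\to X_n$ is order-preserving if $x\le y$ implies $x\alpha\le y\alpha$, order-reversing if $x\le y$ implies $x\alpha\ge y\alpha$, and a contraction if $|x\alpha-y\alpha|\le|x-y|$ for all $x,y$. $\mathcal{ORCT}_n$ is the set of all maps $X_n\to X_n$ (defined on all of $X_n$) that are contractions and are either order-preserving or order-reversing. Height $h(\alpha)=|\mathrm{Im}\,\alpha|$; right waist $w^+(\alpha)=\max(\mathrm{Im}\,\alpha)$. *)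

From mathcomp Require Import all_boot.
Set Implicit Arguments. Unset Strict Implicit. Unset Printing Implicit Defensive.

(* X_n = {1,...,n} is represented by 'I_n = {0,...,n-1} via i |-> i+1.
   Order and distances are invariant under this shift; only the value of
   the right waist needs the +1 correction. *)

Definition distn (m k : nat) : nat := (m - k) + (k - m).

Definition order_preserving n (a : {ffun 'I_n -> 'I_n}) : bool :=
  [forall x : 'I_n, forall y : 'I_n, (x <= y) ==> (a x <= a y)].

Definition order_reversing n (a : {ffun 'I_n -> 'I_n}) : bool :=
  [forall x : 'I_n, forall y : 'I_n, (x <= y) ==> (a y <= a x)].

Definition contraction n (a : {ffun 'I_n -> 'I_n}) : bool :=
  [forall x : 'I_n, forall y : 'I_n, distn (a x) (a y) <= distn x y].

Definition in_ORCT n (a : {ffun 'I_n -> 'I_n}) : bool :=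
  contraction a && (order_preserving a || order_reversing a).

Definition height n (a : {ffun 'I_n -> 'I_n}) : nat := #|[set a x | x : 'I_n]|.

(* right waist: max Im a, read back in X_n = {1..n} (hence the +1) *)
Definition right_waist n (a : {ffun 'I_n -> 'I_n}) : nat :=
  \max_(x : 'I_n) (a x).+1.

Definition F (n p k : nat) : nat :=
  #|[set a : {ffun 'I_n -> 'I_n} | in_ORCT a && (height a == p) && (right_waist a == k)]|.

From mathcomp Require Import all_boot.
From mathcomp Require Import zify.
Set Implicit Arguments. Unset Strict Implicit. Unset Printing Implicit Defensive.

(* Write X_n as 'I_m.+1.  A map is an order-preserving contraction iff its
   values form a sequence with unit steps: a(x+1) - a(x) is 0 or 1.  Such a
   map is determined by its starting value and by its set D of "jump"
   positions; its height is |D| + 1 and its right waist is a(0) + |D| + 1.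
   So the order-preserving contractions with height p and waist k are in
   bijection with the (p-1)-subsets of 'I_m: there are C(n-1, p-1) of them.
   Reversing the domain (x |-> n-1-x) exchanges order-preserving and
   order-reversing contractions, keeping height and waist, so there are as
   many order-reversing ones.  A map is both order-preserving and
   order-reversing iff it is constant, i.e. iff it has height 1.  Hence for
   p > 1 the two classes are disjoint (total 2 C(n-1, p-1)), while for p = 1
   they coincide (total C(n-1, 0) = 1). *)

Definition unit_steps (m : nat) (g : nat -> nat) : Prop :=
  forall x, x < m -> g x <= g x.+1 <= (g x).+1.

Lemma unit_steps_bounds m g : unit_steps m g ->
  forall x y, x <= y -> y <= m -> g x <= g y <= g x + (y - x).
Proof.
move=> Hg x; elim=> [|y IH] hxy hy.
  by rewrite leqn0 in hxy; move/eqP: hxy => ->; lia.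
rewrite leq_eqVlt in hxy; case/orP: hxy => [/eqP->|hxy]; first lia.
have := IH hxy (ltnW hy); have := Hg y hy; lia.
Qed.

Lemma small_steps_onto (g : nat -> nat) m :
  (forall i, i < m -> g i.+1 <= (g i).+1) ->
  forall v, g 0 <= v -> v <= g m -> exists2 x, x <= m & g x = v.
Proof.
elim: m => [|m IH] Hg v h0 hm; first by exists 0 => //; lia.
case: (leqP v (g m)) => hv.
  have [x hx gx] := IH (fun i hi => Hg i (leqW hi)) v h0 hv.
  by exists x => //; lia.
by exists m.+1 => //; have := Hg m (ltnSn m); lia.
Qed.

Lemma card_ord_interval m lo hi : lo <= hi <= m ->
  #|[set v : 'I_m.+1 | lo <= v <= hi]| = hi - lo + 1.
Proof.
move=> hb.
have -> : [set v : 'I_m.+1 | lo <= v <= hi] =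
          [set inord (lo + j) | j : 'I_(hi - lo).+1].
  apply/setP => v; rewrite inE; apply/idP/imsetP.
    move=> /andP[h1 h2]; have hj : v - lo < (hi - lo).+1 by lia.
    exists (Ordinal hj) => //; apply/val_inj => /=.
    have hv := ltn_ord v; rewrite inordK; lia.
  by case=> j _ ->; have hj := ltn_ord j; rewrite inordK; lia.
rewrite card_imset ?card_ord ?addn1 // => j1 j2 /(congr1 val) /=.
have l1 := ltn_ord j1; have l2 := ltn_ord j2.
rewrite !inordK; [|lia|lia].
by move=> e; apply/val_inj => /=; lia.
Qed.

Definition nat_eval m (a : {ffun 'I_m.+1 -> 'I_m.+1}) (x : nat) : nat :=
  a (inord x).

Lemma nat_eval_ord m (a : {ffun 'I_m.+1 -> 'I_m.+1}) (x : 'I_m.+1) :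
  nat_eval a x = a x.
Proof. by rewrite /nat_eval inord_val. Qed.

Section UnitStepMaps.

Variables (m : nat) (a : {ffun 'I_m.+1 -> 'I_m.+1}).

Let ord_le_m (x : 'I_m.+1) : x <= m.
Proof. exact: ltn_ord x. Qed.

Lemma OP_contraction_unit_steps :
  order_preserving a && contraction a <-> unit_steps m (nat_eval a).
Proof.
split.
  move=> /andP[hOP hC] x hx.
  have h1 : x < m.+1 by lia.
  have h2 : x.+1 < m.+1 by lia.
  move/forallP/(_ (inord x))/forallP/(_ (inord x.+1)): hOP.
  move/forallP/(_ (inord x))/forallP/(_ (inord x.+1)): hC.
  rewrite /distn (inordK h1) (inordK h2) /nat_eval.
  by move=> hc /implyP ho; have := ho (leqnSn x); lia.
move=> U; apply/andP; split.
  apply/forallP => x; apply/forallP => y; apply/implyP => hxy.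
  by rewrite -!nat_eval_ord; have := unit_steps_bounds U hxy (ord_le_m y); lia.
apply/forallP => x; apply/forallP => y; rewrite /distn -!nat_eval_ord.
case: (leqP x y) => hxy.
  by have := unit_steps_bounds U hxy (ord_le_m y); lia.
by have := unit_steps_bounds U (ltnW hxy) (ord_le_m x); lia.
Qed.

Hypothesis U : unit_steps m (nat_eval a).

(* The image of a unit-step map is the interval [a 0, a m]. *)
Lemma unit_steps_height : height a = nat_eval a m - nat_eval a 0 + 1.
Proof.
rewrite /height.
have -> : [set a x | x : 'I_m.+1] =
          [set v : 'I_m.+1 | nat_eval a 0 <= v <= nat_eval a m].
  apply/setP => v; rewrite inE; apply/imsetP/idP.
    case=> x _ ->; rewrite -nat_eval_ord.
    have := unit_steps_bounds U (leq0n x) (ord_le_m x).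
    by have := unit_steps_bounds U (ord_le_m x) (leqnn m); lia.
  move=> /andP[h0 h1].
  have Hsmall i : i < m -> nat_eval a i.+1 <= (nat_eval a i).+1.
    by move=> hi; case/andP: (U hi).
  have [x _ gx] := small_steps_onto Hsmall h0 h1.
  by exists (inord x) => //; apply: val_inj; rewrite /= -gx.
rewrite card_ord_interval //.
have := unit_steps_bounds U (leq0n m) (leqnn m).
by have := ord_le_m (a (inord m)); rewrite /nat_eval; lia.
Qed.

Lemma unit_steps_waist : right_waist a = (nat_eval a m).+1.
Proof.
apply/eqP; rewrite eqn_leq; apply/andP; split.
  apply/bigmax_leqP => x _; rewrite -nat_eval_ord ltnS.
  by have := unit_steps_bounds U (ord_le_m x) (leqnn m); lia.
have -> : nat_eval a m = a ord_max.
  by rewrite /nat_eval; congr (nat_of_ord (a _)); apply/val_inj/inordK.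
exact: (@leq_bigmax _ (fun x : 'I_m.+1 => (a x).+1) ord_max).
Qed.

End UnitStepMaps.

(* Number of elements of D below x: the value at x of a map with jump set D. *)
Definition count_below m (D : {set 'I_m}) (x : nat) : nat :=
  #|[set i in D | i < x]|.

Lemma count_below0 m (D : {set 'I_m}) : count_below D 0 = 0.
Proof.
by apply/eqP; rewrite cards_eq0; apply/eqP/setP => i; rewrite !inE ltn0 andbF.
Qed.

Lemma count_below_all m (D : {set 'I_m}) : count_below D m = #|D|.
Proof.
rewrite /count_below; congr #|pred_of_set _|.
by apply/setP => i; rewrite !inE ltn_ord andbT.
Qed.

Lemma count_below_le m (D : {set 'I_m}) x : count_below D x <= #|D|.
Proof. by apply: subset_leq_card; apply/subsetP => i; rewrite inE => /andP[]. Qed.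

Lemma count_belowS m (D : {set 'I_m}) (i : 'I_m) :
  count_below D i.+1 = count_below D i + (i \in D).
Proof.
rewrite /count_below; case: (boolP (i \in D)) => hi.
  rewrite (_ : [set j in D | j < i.+1] = i |: [set j in D | j < i]).
    by rewrite cardsU1 !inE ltnn andbF add1n addn1.
  apply/setP => j; rewrite !inE ltnS leq_eqVlt val_eqE.
  by case: (eqVneq j i) => [->|_]; rewrite ?hi ?ltnn //= andbT.
rewrite addn0; congr #|pred_of_set _|; apply/setP => j.
rewrite !inE ltnS leq_eqVlt val_eqE.
by case: (eqVneq j i) => [->|_]; rewrite ?(negbTE hi).
Qed.

Definition ladder m (lo : nat) (D : {set 'I_m}) : {ffun 'I_m.+1 -> 'I_m.+1} :=
  [ffun x : 'I_m.+1 => inord (lo + count_below D x)].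

Definition jumps m (a : {ffun 'I_m.+1 -> 'I_m.+1}) : {set 'I_m} :=
  [set i : 'I_m | nat_eval a i.+1 != nat_eval a i].

Definition op_class n p k (a : {ffun 'I_n -> 'I_n}) : bool :=
  contraction a && order_preserving a && (height a == p) && (right_waist a == k).

Definition or_class n p k (a : {ffun 'I_n -> 'I_n}) : bool :=
  contraction a && order_reversing a && (height a == p) && (right_waist a == k).

Section Ladders.

Variables (m p k : nat).
Hypotheses (hp : 1 <= p <= k) (hk : k <= m.+1).

Lemma ladder_op_class (D : {set 'I_m}) : #|D| = p.-1 ->
  op_class p k (ladder (k - p) D) /\ jumps (ladder (k - p) D) = D.
Proof.
move=> hD.
have eval y : y <= m -> nat_eval (ladder (k - p) D) y = k - p + count_below D y.
  move=> hy; rewrite /nat_eval ffunE (inordK (_ : y < m.+1)) //.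
  by rewrite inordK //; have := count_below_le D y; lia.
have U : unit_steps m (nat_eval (ladder (k - p) D)).
  move=> x hx; rewrite !eval; [|lia|lia].
  by have := count_belowS D (Ordinal hx); rewrite /= => ->; case: (_ \in _); lia.
have [OP C] := andP (proj2 (OP_contraction_unit_steps _) U).
split.
  rewrite /op_class C OP unit_steps_height ?unit_steps_waist // !eval //.
  by rewrite count_below0 count_below_all; apply/andP; split; apply/eqP; lia.
apply/setP => i; have hi := ltn_ord i; rewrite inE !eval; [|lia|lia].
by rewrite count_belowS; case: (i \in D) => /=; [apply/eqP; lia | rewrite addn0 eqxx].
Qed.

Lemma op_class_ladder (a : {ffun 'I_m.+1 -> 'I_m.+1}) : op_class p k a ->
  #|jumps a| = p.-1 /\ a = ladder (k - p) (jumps a).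
Proof.
move=> /andP[/andP[/andP[C OP] /eqP h] /eqP w].
have U : unit_steps m (nat_eval a) by apply/OP_contraction_unit_steps/andP.
move: h w; rewrite unit_steps_height ?unit_steps_waist // => h w.
have mono := unit_steps_bounds U (leq0n m) (leqnn m).
have form y : y <= m -> nat_eval a y = nat_eval a 0 + count_below (jumps a) y.
  elim: y => [|y IH] hy; first by rewrite count_below0 addn0.
  have hy' : y < m by lia.
  have := count_belowS (jumps a) (Ordinal hy'); rewrite /= => ->.
  rewrite inE /= addnA -IH; last lia.
  by have := U y hy'; case: eqVneq => /= e; lia.
have hD : #|jumps a| = p.-1.
  by have := form m (leqnn m); rewrite count_below_all; lia.
split => //; apply/ffunP => x; rewrite ffunE; apply: val_inj => /=.
have hx := ltn_ord x; rewrite inordK; last by have := count_below_le (jumps a) x; lia.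
by rewrite -[LHS](nat_eval_ord a x) form; lia.
Qed.

Lemma card_op_class :
  #|[set a : {ffun 'I_m.+1 -> 'I_m.+1} | op_class p k a]| = 'C(m, p.-1).
Proof.
have -> : [set a | op_class p k a] =
          ladder (k - p) @: [set D : {set 'I_m} | #|D| == p.-1].
  apply/setP => a; rewrite inE; apply/idP/imsetP.
    move=> Ha; have [hD ea] := op_class_ladder Ha.
    by exists (jumps a) => //; rewrite inE hD.
  by case=> D; rewrite inE => /eqP hD ->; case: (ladder_op_class hD).
rewrite card_in_imset ?card_draws ?card_ord // => D E.
rewrite !inE => /eqP hD /eqP hE e.
by rewrite -(proj2 (ladder_op_class hD)) -(proj2 (ladder_op_class hE)) e.
Qed.

End Ladders.

Definition rev_dom n (a : {ffun 'I_n -> 'I_n}) : {ffun 'I_n -> 'I_n} :=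
  [ffun x => a (rev_ord x)].

Lemma rev_domK n : involutive (@rev_dom n).
Proof. by move=> a; apply/ffunP => x; rewrite !ffunE rev_ordK. Qed.

Lemma distn_rev_ord n (x y : 'I_n) : distn (rev_ord x) (rev_ord y) = distn x y.
Proof. by rewrite /distn /=; have := ltn_ord x; have := ltn_ord y; lia. Qed.

Lemma leq_rev_ord n (x y : 'I_n) : (rev_ord x <= rev_ord y) = (y <= x).
Proof. by rewrite /=; have := ltn_ord x; have := ltn_ord y; lia. Qed.

(* Since rev_dom is an involution, a property of a transfers to rev_dom a
   in both directions as soon as it transfers in one. *)
Lemma rev_dom_invariant n (P Q : pred {ffun 'I_n -> 'I_n}) :
  (forall a, P a -> Q (rev_dom a)) -> (forall a, Q a -> P (rev_dom a)) ->
  forall a, P a = Q (rev_dom a).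
Proof.
move=> PQ QP a; apply/idP/idP => [/PQ //|/QP].
by rewrite rev_domK.
Qed.

Lemma contraction_rev_dom n (a : {ffun 'I_n -> 'I_n}) :
  contraction a = contraction (rev_dom a).
Proof.
have tr (b : {ffun 'I_n -> 'I_n}) : contraction b -> contraction (rev_dom b).
  move=> /forallP Hb; apply/forallP => x; apply/forallP => y.
  by rewrite !ffunE -(distn_rev_ord x y); move/forallP: (Hb (rev_ord x)); apply.
exact: rev_dom_invariant.
Qed.

Lemma order_reversing_rev_dom n (a : {ffun 'I_n -> 'I_n}) :
  order_reversing a = order_preserving (rev_dom a).
Proof.
apply: rev_dom_invariant => b /forallP Hb; apply/forallP => x; apply/forallP => y;
  apply/implyP => hxy; move/forallP/(_ (rev_ord x))/implyP: (Hb (rev_ord y));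
  rewrite !ffunE ?rev_ordK; apply; by rewrite leq_rev_ord.
Qed.

Lemma height_rev_dom n (a : {ffun 'I_n -> 'I_n}) : height a = height (rev_dom a).
Proof.
rewrite /height; congr #|pred_of_set _|; apply/setP => v.
apply/imsetP/imsetP; case=> x _ ->.
  by exists (rev_ord x) => //; rewrite ffunE rev_ordK.
by exists (rev_ord x) => //; rewrite ffunE.
Qed.

Lemma right_waist_rev_dom n (a : {ffun 'I_n -> 'I_n}) :
  right_waist a = right_waist (rev_dom a).
Proof.
rewrite /right_waist (reindex_inj rev_ord_inj) /=.
by apply: eq_bigr => x _; rewrite ffunE.
Qed.

(* Reversal maps or_class p k onto op_class p k, so the two have equal size. *)
Lemma card_or_class (n p k : nat) :
  #|[set a : {ffun 'I_n -> 'I_n} | or_class p k a]| =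
  #|[set a : {ffun 'I_n -> 'I_n} | op_class p k a]|.
Proof.
have -> : [set a | or_class p k a] = @rev_dom n @: [set a | op_class p k a].
  rewrite (can2_imset_pre _ (@rev_domK n) (@rev_domK n)); apply/setP => a.
  rewrite !inE /or_class /op_class contraction_rev_dom order_reversing_rev_dom.
  by rewrite height_rev_dom right_waist_rev_dom.
by rewrite card_imset //; apply: can_inj (@rev_domK n).
Qed.

Lemma OP_OR_height1 m (a : {ffun 'I_m.+1 -> 'I_m.+1}) :
  order_preserving a && order_reversing a = (height a == 1).
Proof.
apply/andP/cards1P => [[/forallP OP /forallP OR] | [v hv]].
  exists (a ord0); apply/setP => v; rewrite inE; apply/imsetP/eqP.
    case=> x _ ->; apply/val_inj/eqP; rewrite eqn_leq.
    move/forallP/(_ x)/implyP: (OP ord0) => ->//.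
    by move/forallP/(_ x)/implyP: (OR ord0) => ->.
  by move=> ->; exists ord0.
have const x : a x = v by apply/set1P; rewrite -hv; apply/imsetP; exists x.
by split; apply/forallP => x; apply/forallP => y; rewrite !const leqnn implybT.
Qed.

Lemma F_set_split n p k :
  [set a : {ffun 'I_n -> 'I_n} |
     in_ORCT a && (height a == p) && (right_waist a == k)] =
  [set a | op_class p k a] :|: [set a | or_class p k a].
Proof.
apply/setP => a; rewrite !inE /in_ORCT /op_class /or_class.
by case: (contraction a); case: (order_preserving a); case: (order_reversing a);
  rewrite /= ?orbb ?orbF.
Qed.

(* For p <> 1 no map of height p is both order-preserving and
   order-reversing, so the two classes are disjoint. *)
Lemma op_or_class_disjoint (m p k : nat) : p != 1 ->
  [set a : {ffun 'I_m.+1 -> 'I_m.+1} | op_class p k a]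
    :&: [set a | or_class p k a] = set0.
Proof.
move=> hp; apply/setP => a; rewrite !inE /op_class /or_class; apply/negP.
case/andP => /andP[/andP[/andP[_ OP] /eqP h] _] /andP[/andP[/andP[_ OR] _] _].
by move: (OP_OR_height1 a); rewrite OP OR h (negbTE hp).
Qed.

(* Maps of height 1 are both order-preserving and order-reversing, so for
   p = 1 the two classes coincide. *)
Lemma or_class_height1 (m k : nat) (a : {ffun 'I_m.+1 -> 'I_m.+1}) :
  or_class 1 k a = op_class 1 k a.
Proof.
rewrite /op_class /or_class; case: (boolP (height a == 1)) => h; last first.
  by rewrite !andbF.
by move: (OP_OR_height1 a); rewrite h => /andP[-> ->].
Qed.

Theorem proposition3p3 (n p k : nat) :
  1 <= n -> 1 <= p -> p <= k -> k <= n ->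
  F n p k = (if 1 < p then 2 * 'C(n.-1, p.-1) else 1).
Proof.
case: n => [//|m] _ hp1 hpk hk /=.
have hp : 1 <= p <= k by rewrite hp1 hpk.
rewrite /F F_set_split; case: ltnP => hp2.
- have hp_neq1 : p != 1 by rewrite neq_ltn hp2 orbT.
  rewrite cardsU op_or_class_disjoint // cards0 subn0.
  by rewrite card_or_class card_op_class // addnn mul2n.
- have p1 : p = 1 by lia.
  have -> : [set a : {ffun 'I_m.+1 -> 'I_m.+1} | or_class p k a] =
            [set a | op_class p k a].
    by apply/setP => a; rewrite !inE p1 or_class_height1.
  by rewrite setUid card_op_class // p1 bin0.
Qed.
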